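(* There exists a function assigning to each real $x \geq 1$ a positive integer $m = m(x)$ such that: (i) $\varphi(m) \leq x$; (ii) $m = 2^t Q$, where $t \geq 0$ is an integer and $Q$ is an odd squarefree positive integer; and (iii) \[ m(x) \geq \left(\tfrac{1}{2} e^{\gamma} + o(1)\right) x \log\log x \quad \text{as } x \to +\infty, \] i.e., $\liminf_{x\to+\infty} m(x)/(x\log\log x) \geq \tfrac12 e^{\gamma}$.
   Context: $\varphi$ denotes Euler's totient function and $\gamma$ is the Euler--Mascheroni constant. $\log$ is the natural logarithm. *)

From Stdlib Require Import Reals.
From mathcomp Require Import ssreflect ssrbool eqtype ssrnat div prime.

Definition phi (n : nat) : nat := totient n.

Definition squarefree (q : nat) : Prop :=
  forall d : nat, (1 < d)%N -> ~ (d * d %| q)%N.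

(* g is the Euler--Mascheroni constant: g = lim_{n->oo} (H_n - ln n).
   Here sum_f_R0 (fun k => / INR (k+1)) n = H_{n+1}. *)
Definition is_euler_gamma (g : R) : Prop :=
  Un_cv (fun n : nat =>
           (sum_f_R0 (fun k : nat => / INR (k + 1)) n - ln (INR (n + 1)))%R) g.

(* Let y be the largest integer with y^(y+1) <= x, so that ln y ~ ln ln x, and let
   A be the product of p - 1 over the odd primes p <= y, so that A <= y^(y+1) <= x.
   Removing one odd prime q from the product of the odd primes up to y and
   multiplying by a power of two gives m = 2^(j+1) * prod_{p <= y odd, p <> q} p,
   with phi(m) = 2^j A / (q - 1).  For fifteen explicit primes q in [101, 1087] the
   numbers 2^j / (q - 1) are 20/19-dense, so j and q can be chosen with
   19x/20 <= phi(m) <= x.  Then m / phi(m) = (q-1)/q * prod_{p <= y} p/(p-1), and the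
   Euler product dominates the harmonic sum H_y >= ln (y+1), so
   m >= (19/20) (100/101) x ln (y+1) = (95/101) x ln (y+1). *)

From Stdlib Require Import Reals Lra Lia ZArith ClassicalEpsilon.
From mathcomp Require Import all_boot all_order all_algebra zify.
From mathcomp Require Import Rstruct.

Set Implicit Arguments. Unset Strict Implicit. Unset Printing Implicit Defensive.
Import Order.TTheory GRing.Theory Num.Theory.

(* MathComp rebinds the keys %Z and %R to int_scope and ring_scope; the statement
   of lemma2 uses them for the Stdlib integers and reals. *)
Delimit Scope Z_scope with Z.
Delimit Scope R_scope with R.

Lemma coprime_prod_primes (s : seq nat) p : all prime s -> prime p -> p \notin s ->
  coprime p (\prod_(q <- s) q).
Proof.
move=> + p_pr; elim: s => [|a r IH] /=; first by rewrite big_nil coprimen1.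
case/andP=> a_pr r_pr; rewrite inE negb_or => /andP[p_a p_r].
by rewrite big_cons coprimeMr IH // andbT prime_coprime // dvdn_prime2.
Qed.

Lemma totient_prod_primes (s : seq nat) : uniq s -> all prime s ->
  totient (\prod_(p <- s) p) = \prod_(p <- s) p.-1.
Proof.
elim: s => [|a r IH] /=; first by rewrite !big_nil.
case/andP=> a_r r_uniq /andP[a_pr r_pr].
rewrite !big_cons totient_coprime; last by rewrite coprime_prod_primes.
by rewrite totient_prime // IH.
Qed.

Lemma squarefree_prod_primes (s : seq nat) : uniq s -> all prime s ->
  squarefree (\prod_(p <- s) p).
Proof.
move=> s_uniq s_pr d d_gt1 dd_dvd; set r := pdiv d.
have r_pr : prime r := pdiv_prime d_gt1.
have rr_dvd : r * r %| \prod_(p <- s) p.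
  exact: dvdn_trans (dvdn_mul (pdiv_dvd d) (pdiv_dvd d)) dd_dvd.
have r_s : r \in s.
  apply: contraLR (dvdn_trans (dvdn_mulr r (dvdnn r)) rr_dvd) => r_notin.
  by rewrite -prime_coprime ?coprime_prod_primes.
move: rr_dvd; rewrite (big_rem r r_s) dvdn_pmul2l ?prime_gt0 //; apply/negP.
rewrite -prime_coprime // coprime_prod_primes ?mem_rem_uniqF //.
by apply/allP => x /(mem_subseq (rem_subseq r s)); apply: (allP s_pr).
Qed.

Lemma odd_prod (s : seq nat) : all odd s -> odd (\prod_(p <- s) p).
Proof.
by elim: s => [|a s IH] /=; rewrite ?big_nil // big_cons => /andP[a_odd /IH]; rewrite oddM a_odd.
Qed.

(** * Euler products dominate harmonic sums *)

Section EulerProduct.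
Local Open Scope ring_scope.

Variable F : realFieldType.

Definition euler_factor (p : nat) : F := p%:R / (p%:R - 1).

Lemma geometric_sum_le (r : F) n : 0 <= r < 1 -> \sum_(j < n) r ^+ j <= (1 - r)^-1.
Proof.
case/andP=> r0 r1; have r1' : 0 < 1 - r by rewrite subr_gt0.
elim: n => [|n IH]; first by rewrite big_ord0 invr_ge0 ltW.
rewrite big_ord_recl expr0; under eq_bigr => j _ do rewrite exprS.
have E : 1 + r * (1 - r)^-1 = (1 - r)^-1.
  apply/eqP; rewrite eq_sym -subr_eq -[X in X - _]mul1r -mulrBl divff //.
  exact: lt0r_neq0.
rewrite -mulr_sumr -E lerD2l; apply: ler_wpM2l => //.
Qed.

Lemma euler_factorE p : (1 < p)%N -> euler_factor p = (1 - p%:R^-1)^-1.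
Proof.
move=> p1; have p0 : p%:R != 0 :> F by rewrite pnatr_eq0; lia.
have -> : 1 - p%:R^-1 = (p%:R - 1) / p%:R :> F by rewrite mulrBl mul1r divff.
by rewrite invf_div.
Qed.

Lemma sum_inv_pow_le_euler_factor p n : (1 < p)%N ->
  \sum_(j < n) (p%:R ^+ j)^-1 <= euler_factor p.
Proof.
move=> p1; rewrite euler_factorE //; under eq_bigr => j _ do rewrite -exprVn.
apply: geometric_sum_le; rewrite invr_ge0 ler0n /= invf_lt1 ?ltr1n //.
by rewrite ltr0n; lia.
Qed.

Definition euler_product (y : nat) : F := \prod_(p < y.+1 | prime p) euler_factor p.

Variable y : nat.

(* Expanding prod_(i <= y) sum_(j <= y) euler_term i j gives one term per exponent
   profile f : 'I_y.+1 -> 'I_y.+1; the profile i |-> logn i k of 1 <= k <= y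
   contributes exactly 1/k. *)
Definition euler_term (i j : 'I_y.+1) : F :=
  if prime i then (i%:R ^+ j)^-1 else (j == ord0)%:R.

Definition log_profile (k : nat) : {ffun 'I_y.+1 -> 'I_y.+1} :=
  [ffun i : 'I_y.+1 => inord (logn i k)].

Lemma log_profileE k (i : 'I_y.+1) : (0 < k)%N -> (k <= y)%N ->
  log_profile k i = logn i k :> nat.
Proof.
move=> k0 ky; rewrite ffunE inordK //.
by apply: leq_trans (ltn_logl i k0) _; lia.
Qed.

Lemma prod_logn k : (0 < k)%N -> (k <= y)%N -> (\prod_(i < y.+1) i ^ logn i k)%N = k.
Proof.
move=> k0 ky; rewrite -[RHS](partnT k0) (widen_partn _ ky) big_mkord.
by apply: eq_bigl.
Qed.

Lemma prod_euler_term_log_profile k : (0 < k)%N -> (k <= y)%N ->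
  \prod_i euler_term i (log_profile k i) = k%:R^-1.
Proof.
move=> k0 ky; rewrite -{2}(prod_logn k0 ky) natr_prod -prodfV; apply: eq_bigr => i _.
rewrite /euler_term natrX; case: ifP => i_pr; first by rewrite log_profileE.
have log0 : logn i k = 0%N by rewrite lognE i_pr.
rewrite log0 expr0 invr1 (_ : log_profile k i = ord0) //.
by apply: val_inj; rewrite /= log_profileE.
Qed.

Lemma log_profile_inj :
  {in [pred k : 'I_y.+1 | (0 < k)%N] &, injective (fun k : 'I_y.+1 => log_profile k)}.
Proof.
move=> a b; rewrite !inE => a0 b0 ab; apply: val_inj; apply: eqn_from_log => // p.
have [py | yp] := ltnP p y.+1; last by rewrite !ltn_log0 //; apply: leq_trans (ltn_ord _) yp.
have := congr1 (fun f : {ffun 'I_y.+1 -> 'I_y.+1} => nat_of_ord (f (Ordinal py))) ab.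
by rewrite /= !log_profileE // -ltnS.
Qed.

Lemma harmonic_le_euler_product :
  \sum_(k < y.+1 | (0 < k)%N) k%:R^-1 <= euler_product y.
Proof.
rewrite /euler_product; set pos := [pred k : 'I_y.+1 | (0 < k)%N].
have term_ge0 i j : 0 <= euler_term i j.
  by rewrite /euler_term; case: ifP => _; rewrite ?invr_ge0 ?exprn_ge0 ?ler0n.
have -> : \sum_(k < y.+1 | (0 < k)%N) k%:R^-1 =
          \sum_(k in pos) \prod_i euler_term i (log_profile k i).
  by apply: eq_big => // k k0; rewrite prod_euler_term_log_profile // -ltnS.
rewrite -(big_imset (fun f : {ffun _} => \prod_i euler_term i (f i)) log_profile_inj) /=.
apply: (@le_trans _ _ (\prod_i \sum_j euler_term i j)).
  rewrite bigA_distr_bigA /= [leRHS](bigID [in [set log_profile k | k : 'I_y.+1 in pos]]) /=.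
  by rewrite lerDl; apply: sumr_ge0 => f _; apply: prodr_ge0 => i _.
rewrite [leRHS]big_mkcond /=; apply: ler_prod => i _.
rewrite sumr_ge0 //= /euler_term; case: ifP => i_pr.
  by apply: sum_inv_pow_le_euler_factor; apply: prime_gt1.
by rewrite (bigD1 ord0) //= big1 ?addr0 // => j /negPf ->.
Qed.

End EulerProduct.

(** * Near-primorials *)

Definition odd_primes_upto (y : nat) : seq nat := [seq p <- iota 0 y.+1 | prime p && odd p].

Lemma mem_odd_primes_upto y p : (p \in odd_primes_upto y) = [&& prime p, odd p & (p <= y)%N].
Proof. by rewrite mem_filter mem_iota /= add0n ltnS -andbA. Qed.

Definition pow2_odd_squarefree (n : nat) : Prop :=
  exists t Q : nat, n = (2 ^ t * Q)%N /\ odd Q /\ (0 < Q)%N /\ squarefree Q.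

Definition near_primorial (y q j : nat) : nat :=
  2 ^ j.+1 * \prod_(p <- rem q (odd_primes_upto y)) p.

Section NearPrimorial.

Variables y q j : nat.
Let s := rem q (odd_primes_upto y).

Lemma near_primorial_seq : [/\ uniq s, all prime s & all odd s].
Proof.
have sub : {subset s <= odd_primes_upto y} := mem_subseq (rem_subseq q _).
split; first by rewrite rem_uniq // filter_uniq // iota_uniq.
  by apply/allP => p /sub; rewrite mem_odd_primes_upto => /and3P[].
by apply/allP => p /sub; rewrite mem_odd_primes_upto => /and3P[].
Qed.

Lemma near_primorial_shape : pow2_odd_squarefree (near_primorial y q j).
Proof.
have [s_uniq s_pr s_odd] := near_primorial_seq.
exists j.+1, (\prod_(p <- s) p); split=> //; split; first exact: odd_prod.
by split; [apply: odd_gt0; apply: odd_prod | apply: squarefree_prod_primes].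
Qed.

Lemma totient_near_primorial :
  totient (near_primorial y q j) = (2 ^ j * \prod_(p <- s) p.-1)%N.
Proof.
have [s_uniq s_pr s_odd] := near_primorial_seq.
rewrite totient_coprime ?coprimeXl ?coprime2n ?odd_prod //.
by rewrite totient_pfactor // mul1n totient_prod_primes.
Qed.

Lemma totient_near_primorial_mul_pred : q \in odd_primes_upto y ->
  (totient (near_primorial y q j) * q.-1 = 2 ^ j * \prod_(p <- odd_primes_upto y) p.-1)%N.
Proof.
move=> q_in; rewrite totient_near_primorial (big_rem q q_in) /= -mulnA.
by congr (_ * _); apply: mulnC.
Qed.

End NearPrimorial.

Lemma prod_odd_primes_pred_gt0 y : (0 < \prod_(p <- odd_primes_upto y) p.-1)%N.
Proof.
rewrite big_seq; apply: prodn_cond_gt0 => p.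
rewrite mem_odd_primes_upto => /and3P[p_pr p_odd _].
by have := odd_prime_gt2 p_odd p_pr; lia.
Qed.

Lemma prod_odd_primes_pred_le y : (0 < y)%N ->
  (\prod_(p <- odd_primes_upto y) p.-1 <= y ^ y.+1)%N.
Proof.
move=> y0; have prod_le s : all (fun p => p.-1 <= y) s -> \prod_(p <- s) p.-1 <= y ^ size s.
  elim: s => [|a s IH] /=; first by rewrite big_nil.
  by case/andP=> ay /IH; rewrite big_cons expnS; apply: leq_mul.
apply: leq_trans (prod_le _ _) _.
  by apply/allP => p; rewrite mem_odd_primes_upto => /and3P[_ _ py]; lia.
rewrite leq_pexp2l // size_filter; apply: leq_trans (count_size _ _) _.
by rewrite size_iota.
Qed.

Section NearPrimorialRatio.
Local Open Scope ring_scope.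
Variable F : realFieldType.

Lemma euler_factor_neq0 p : (1 < p)%N -> euler_factor F p != 0.
Proof.
move=> p1; rewrite mulf_neq0 ?invr_eq0 ?subr_eq0 ?pnatr_eq0 ?pnatr_eq1 //; lia.
Qed.

Lemma natr_pred_mul_euler_factor p : (1 < p)%N -> p.-1%:R * euler_factor F p = p%:R.
Proof.
move=> p1; have p1' : p%:R - 1 != 0 :> F by rewrite subr_eq0 pnatr_eq1; lia.
have -> : p.-1%:R = p%:R - 1 :> F by rewrite -[in RHS](prednK (ltnW p1)) -natr1 addrK.
by rewrite mulrC divfK.
Qed.

Lemma natr_prod_primes (s : seq nat) : all prime s ->
  (\prod_(p <- s) p)%:R = (\prod_(p <- s) p.-1)%:R * \prod_(p <- s) euler_factor F p.
Proof.
elim: s => [|a s IH] /=; first by rewrite !big_nil mulr1.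
case/andP=> a_pr s_pr; rewrite !big_cons !natrM IH // mulrACA.
by rewrite natr_pred_mul_euler_factor // prime_gt1.
Qed.

Lemma prod_primes_split (G : nat -> F) y : (2 <= y)%N ->
  \prod_(p < y.+1 | prime p) G p = G 2%N * \prod_(p <- odd_primes_upto y) G p.
Proof.
move=> y2; rewrite -big_mkord /index_iota subn0 -big_filter.
rewrite (bigD1_seq 2) ?mem_filter ?mem_iota ?filter_uniq ?iota_uniq //.
rewrite big_filter_cond big_filter; congr (_ * _); apply: eq_bigl => p.
case: (boolP (prime p)) => //= p_pr; case: (even_prime p_pr) => [-> // | p_odd].
by rewrite p_odd; apply/eqP => p2; rewrite p2 in p_odd.
Qed.

Lemma near_primorial_ratio y q j : (2 <= y)%N -> q \in odd_primes_upto y ->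
  (near_primorial y q j)%:R =
  (totient (near_primorial y q j))%:R * euler_product F y / euler_factor F q.
Proof.
move=> y2 q_in; have [_ s_pr _] := near_primorial_seq y q.
have q1 : (1 < q)%N by move: q_in; rewrite mem_odd_primes_upto => /and3P[/prime_gt1].
rewrite totient_near_primorial /euler_product prod_primes_split // (big_rem q q_in) /=.
rewrite /near_primorial natrM natr_prod_primes // natrM expnS natrM.
have -> : euler_factor F 2 = 2 by rewrite /euler_factor -natr1 addrK divr1.
set e := euler_factor F q; set P := \prod_(_ <- _) euler_factor F _.
rewrite [e * P]mulrC (mulrA 2 P e) [X in _ = X / e]mulrA mulfK ?euler_factor_neq0 //.
by rewrite -!mulrA [LHS]mulrCA; congr (_ * _); apply: mulrCA.
Qed.

End NearPrimorialRatio.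

Lemma self_pow_root_subproof N : exists y, (y ^ y.+1 <= N)%N.
Proof. by exists 0%N; rewrite exp0n. Qed.

Lemma self_pow_root_bound N y : (y ^ y.+1 <= N -> y <= N)%N.
Proof.
case: y => [|y] // le_N; apply: leq_trans le_N.
by rewrite -[X in (X <= _)%N]expn1 leq_pexp2l.
Qed.

Definition self_pow_root (N : nat) : nat :=
  ex_maxn (self_pow_root_subproof N) (@self_pow_root_bound N).

Lemma self_pow_rootP N (y := self_pow_root N) :
  [/\ (y ^ y.+1 <= N)%N, (N < y.+1 ^ y.+2)%N & forall Y, (Y ^ Y.+1 <= N -> Y <= y)%N].
Proof.
rewrite /y /self_pow_root; case: ex_maxnP => z z_le z_max; split=> //.
by rewrite ltnNge; apply/negP => /z_max; rewrite ltnn.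
Qed.

Local Open Scope R_scope.

(** * Logarithms and Euler's constant *)

Lemma ln_le_sub1 v : 0 < v -> ln v <= v - 1.
Proof. by move=> v0; have := exp_ineq1_le (ln v); rewrite exp_ln //; lra. Qed.

Lemma ln_le x y : 0 < x -> x <= y -> ln x <= ln y.
Proof. by move=> x0 [xy | <-]; [left; apply: ln_increasing | right]. Qed.

Lemma ln_gt0 x : 1 < x -> 0 < ln x.
Proof. by move=> x1; rewrite -ln_1; apply: ln_increasing; lra. Qed.

Lemma inv_succ_le_ln_succ_sub u : 0 < u -> / (u + 1) <= ln (u + 1) - ln u.
Proof.
move=> u0; have := ln_le_sub1 (Rdiv_lt_0_compat u (u + 1) u0 ltac:(lra)).
rewrite /Rdiv ln_mult ?ln_Rinv; try (apply: Rinv_0_lt_compat); try lra.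
have -> : u * / (u + 1) - 1 = - / (u + 1) by field; lra.
lra.
Qed.

Lemma ln_succ_sub_le_inv u : 0 < u -> ln (u + 1) - ln u <= / u.
Proof.
move=> u0; have := ln_le_sub1 (Rdiv_lt_0_compat (u + 1) u ltac:(lra) u0).
rewrite /Rdiv ln_mult ?ln_Rinv; try (apply: Rinv_0_lt_compat); try lra.
have -> : (u + 1) * / u - 1 = / u by field; lra.
lra.
Qed.

Lemma ln_le_2sqrt u : 0 < u -> ln u <= 2 * sqrt u.
Proof.
move=> u0; have s0 : 0 < sqrt u by apply: sqrt_lt_R0.
rewrite -[in ln u](sqrt_sqrt u) ?ln_mult; try lra.
by have := ln_le_sub1 s0; lra.
Qed.

Lemma ln_ge_of_pow_le (n k : nat) (a : R) : (0 < n)%N ->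
  (1 + / INR n) ^ k <= a -> INR k / (INR n + 1) <= ln a.
Proof.
move=> n0 le_a; have n0R : 0 < INR n by apply: lt_0_INR; lia.
have base : 0 < 1 + / INR n by have := Rinv_0_lt_compat _ n0R; lra.
have step : / (INR n + 1) <= ln (1 + / INR n).
  have -> : 1 + / INR n = (INR n + 1) * / INR n by field; lra.
  rewrite ln_mult ?ln_Rinv //; first exact: inv_succ_le_ln_succ_sub.
  - lra.
  - exact: Rinv_0_lt_compat.
apply: Rle_trans (ln_le (pow_lt _ k base) le_a); rewrite ln_pow //.
by apply: Rmult_le_compat_l step; apply: pos_INR.
Qed.

Lemma IZR_pow_div_le (a b c d : Z) (k : nat) : (0 < b)%Z -> (0 < d)%Z ->
  (a ^ Z.of_nat k * d <= c * b ^ Z.of_nat k)%Z -> (IZR a / IZR b) ^ k <= IZR c / IZR d.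
Proof.
move=> b0 d0 /IZR_le; rewrite !mult_IZR -!pow_IZR => le_ac.
have b0R := IZR_lt _ _ b0; have d0R := IZR_lt _ _ d0.
have bk0 : 0 < IZR b ^ k by apply: pow_lt.
rewrite /Rdiv Rpow_mult_distr pow_inv.
apply: (Rmult_le_reg_r (IZR b ^ k * IZR d)); first by apply: Rmult_lt_0_compat.
have -> : IZR a ^ k * / IZR b ^ k * (IZR b ^ k * IZR d) = IZR a ^ k * IZR d by field; lra.
by have -> : IZR c * / IZR d * (IZR b ^ k * IZR d) = IZR c * IZR b ^ k by field; lra.
Qed.

(* H_n - ln n decreases to gamma, so gamma <= H_32 - 5 ln 2; the logarithms are
   bounded below through powers of 1025/1024. *)
Lemma euler_gamma_lt g : is_euler_gamma g -> exp g < 190 / 101.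
Proof.
move=> gammaE.
set a := fun n : nat => sum_f_R0 (fun k => / INR (k + 1)) n - ln (INR (n + 1)).
have a_decr : Un_decreasing a.
  move=> n; rewrite /a tech5.
  have -> : INR (S n + 1) = INR (n + 1) + 1 by rewrite -S_INR; congr INR; lia.
  have := inv_succ_le_ln_succ_sub (lt_0_INR (n + 1) ltac:(lia)); lra.
have := decreasing_ineq a g a_decr gammaE 31; rewrite /a.
have -> : INR (31 + 1) = 2 ^ 5 by rewrite INR_IZR_INZ /=; lra.
rewrite ln_pow; last lra.
have H32 : sum_f_R0 (fun k => / INR (k + 1)) 31 <= 406 / 100.
  by cbv [sum_f_R0]; rewrite !addn1 !INR_IZR_INZ; cbn [Z.of_nat Pos.of_succ_nat Pos.succ]; lra.
have r1024 : 1 + / INR 1024 = IZR 1025 / IZR 1024 by rewrite INR_IZR_INZ /=; field.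
have ln2 : INR 710 / (INR 1024 + 1) <= ln 2.
  apply: ln_ge_of_pow_le => //; rewrite r1024 (_ : 2 = IZR 2 / IZR 1); last by simpl; field.
  by apply: IZR_pow_div_le; [lia | lia | apply/Z.leb_le; vm_compute].
have lnc : INR 647 / (INR 1024 + 1) <= ln (190 / 101).
  apply: ln_ge_of_pow_le => //; rewrite r1024.
  by apply: IZR_pow_div_le; [lia | lia | apply/Z.leb_le; vm_compute].
move=> g_le; rewrite !INR_IZR_INZ in ln2 lnc g_le.
cbn [Z.of_nat Pos.of_succ_nat Pos.succ] in ln2, lnc, g_le.
rewrite -[190 / 101]exp_ln; last lra.
by apply: exp_increasing; lra.
Qed.

Section HarmonicLn.
Local Open Scope ring_scope.

Lemma ln_le_harmonic y : ln (INR y.+1) <= \sum_(k < y.+1 | (0 < k)%N) k%:R^-1.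
Proof.
elim: y => [|y IH].
  by rewrite /= ln_1 R0E; apply: sumr_ge0 => k _; rewrite invr_ge0 ler0n.
rewrite big_mkcond big_ord_recr /= -big_mkcond.
have /RleP := ln_succ_sub_le_inv (lt_0_INR y.+1 ltac:(lia)).
rewrite -S_INR RminusE RinvE => step.
apply: le_trans (lerD IH (lexx _)); rewrite -lerBlDl -INRE.
exact: step.
Qed.
End HarmonicLn.

Lemma ln_le_euler_product y : ln (INR y.+1) <= euler_product R y.
Proof. by apply/RleP; apply: le_trans (ln_le_harmonic y) (harmonic_le_euler_product R y). Qed.

Lemma euler_factor_bounds q : (101 <= q)%N -> 0 < euler_factor R q <= 101 / 100.
Proof.
move=> q101; have q101R : INR 101 <= INR q by apply: le_INR; apply/ssrnat.leP.
rewrite INR_IZR_INZ /= in q101R.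
rewrite /euler_factor -INRE -R1E -RminusE -RdivE.
split; first by apply: Rdiv_lt_0_compat; lra.
apply: (Rmult_le_reg_r (INR q - 1)); first lra.
by rewrite /Rdiv Rmult_assoc Rinv_l; lra.
Qed.

Lemma INR_expn a b : INR (a ^ b) = INR a ^ b.
Proof. by rewrite !INRE natrX RpowE. Qed.

Definition floor_nat (x : R) : nat := Z.to_nat (Int_part x).

Lemma floor_natP x : 0 <= x -> INR (floor_nat x) <= x < INR (floor_nat x) + 1.
Proof.
move=> x0; have [lo hi] := base_Int_part x.
have gtm1 : (-1 < Int_part x)%Z by apply: lt_IZR; lra.
by rewrite /floor_nat INR_IZR_INZ Z2Nat.id; [lra | lia].
Qed.

Definition pow_root (x : R) : nat := self_pow_root (floor_nat x).

Lemma pow_rootP x (y := pow_root x) : 0 <= x ->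
  [/\ INR (y ^ y.+1) <= x, x < INR y.+1 ^ y.+2 & forall Y, INR (Y ^ Y.+1) <= x -> (Y <= y)%N].
Proof.
move=> x0; have [lo hi] := floor_natP x0.
have [y_le lt_y y_max] := self_pow_rootP (floor_nat x).
rewrite -/(pow_root x) -/y in y_le lt_y y_max.
split.
- by apply: (Rle_trans _ _ _ _ lo); apply: le_INR; apply/ssrnat.leP.
- rewrite -INR_expn; apply: Rlt_le_trans hi _.
  by rewrite -S_INR; apply: le_INR; apply/ssrnat.leP.
- move=> Y le_Y; apply: y_max; rewrite -ltnS; apply/ssrnat.ltP; apply: INR_lt; rewrite S_INR; lra.
Qed.

Lemma ln2_lt1 : ln 2 < 1.
Proof. by rewrite -[1](ln_exp 1); apply: ln_increasing; have := exp_ineq1 1; lra. Qed.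

Lemma lnln_lt_of_lt_self_pow (y : nat) (x : R) : 1 < x -> x < INR y.+1 ^ y.+2 ->
  ln (ln x) < 1 + ln (INR y.+1) + 2 * sqrt (ln (INR y.+1)).
Proof.
move=> x1 x_lt; set u := ln (INR y.+1).
have y0 : 0 < INR y.+1 by apply: lt_0_INR; lia.
have lnx0 := ln_gt0 x1.
have lnx_lt : ln x < INR y.+2 * u by rewrite -ln_pow //; apply: ln_increasing; lra.
have y1 : 1 <= INR y.+1 by apply: (le_INR 1); lia.
have y2 : INR y.+2 <= 2 * INR y.+1 by rewrite S_INR; lra.
have u0 : 0 < u by have := pos_INR y.+1; rewrite S_INR in lnx_lt; nra.
have lnlnx_lt : ln (ln x) < ln (2 * INR y.+1 * u) by apply: ln_increasing; nra.
rewrite !ln_mult in lnlnx_lt; try nra.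
rewrite -/u in lnlnx_lt; have := ln_le_2sqrt u0; have := ln2_lt1; lra.
Qed.

Lemma sqrt_sublinear (th : R) : 0 < th < 1 ->
  exists U, forall u, U <= u -> th * (1 + u + 2 * sqrt u) <= u.
Proof.
move=> [th0 th1]; set d := / th - 1.
have inv_th : 1 < / th by rewrite -Rinv_1; apply: Rinv_lt_contravar; lra.
have d0 : 0 < d by rewrite /d; lra.
exists (1 + (3 / d) ^ 2) => u uU.
have u1 : 1 <= u by have := pow2_ge_0 (3 / d); lra.
have u3 : (3 / d) ^ 2 <= u by lra.
have s1 : 1 <= sqrt u by rewrite -sqrt_1; apply: sqrt_le_1_alt.
have s3 : 3 / d <= sqrt u.
  rewrite -(sqrt_pow2 (3 / d)); first exact: sqrt_le_1_alt.
  by apply: Rlt_le; apply: Rdiv_lt_0_compat; lra.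
have su : sqrt u * sqrt u = u by apply: sqrt_sqrt; lra.
have d3 : d * (3 / d) = 3 by field; lra.
have ds : 3 <= d * sqrt u by nra.
have key : 1 + 2 * sqrt u <= d * u.
  have : 3 * sqrt u <= d * sqrt u * sqrt u by apply: Rmult_le_compat_r; lra.
  by rewrite Rmult_assoc su; lra.
rewrite [X in _ <= X](_ : u = th * (u + d * u)); last by rewrite /d; field; lra.
by apply: Rmult_le_compat_l; lra.
Qed.

Lemma lnln_le_ln_pow_root th Y0 : 0 < th < 1 -> exists X, forall x, X <= x ->
  [/\ 1 <= x, 0 <= ln (ln x), (Y0 <= pow_root x)%N &
      th * ln (ln x) <= ln (INR (pow_root x).+1)].
Proof.
move=> th01; have [U sublin] := sqrt_sublinear th01.
have [Y YU] := INR_unbounded (exp U).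
set Y1 := maxn Y Y0.
have e1 : 1 < exp 1 by have := exp_ineq1 1; lra.
exists (Rmax (exp 1) (INR (Y1 ^ Y1.+1))) => x Xx.
have xe : exp 1 <= x := Rle_trans _ _ _ (Rmax_l _ _) Xx.
have xY : INR (Y1 ^ Y1.+1) <= x := Rle_trans _ _ _ (Rmax_r _ _) Xx.
have [_ x_lt y_max] := pow_rootP (x := x) ltac:(lra).
set y := pow_root x in x_lt y_max *.
have Y1y : (Y1 <= y)%N := y_max _ xY.
have lnx1 : 1 <= ln x by rewrite -(ln_exp 1); apply: ln_le; [apply: exp_pos | exact: xe].
have lnlnx0 : 0 <= ln (ln x) by rewrite -ln_1; apply: ln_le; lra.
split=> //; [lra | lia |].
have Uu : U <= ln (INR y.+1).
  rewrite -(ln_exp U); apply: ln_le; first exact: exp_pos.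
  by apply: Rle_trans (Rlt_le _ _ YU) _; apply: le_INR; apply/ssrnat.leP; lia.
have := lnln_lt_of_lt_self_pow (x := x) ltac:(lra) x_lt.
have := sublin _ Uu; nra.
Qed.

(* Primes q for which the ratios 2^j / (q - 1), j : nat, are 20/19-dense. *)
Definition net_primes : seq nat :=
  [:: 257; 977; 929; 883; 839; 401; 761; 727; 691; 659; 631; 601; 571; 1087; 1033]%N.

Lemma net_primesP :
  all (fun q => [&& prime q, odd q, 101 <= q & q <= 1087]%N) net_primes.
Proof. by vm_compute. Qed.

Ltac net_witness j q :=
  exists j, q; split; [by [] | rewrite INR_IZR_INZ; cbn -[IZR]; lra].

Lemma net_approx_base z : 1 <= z < 2 -> exists j q : nat,
  q \in net_primes /\ 19 / 20 * z * INR q.-1 <= 2 ^ j <= z * INR q.-1.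
Proof.
move=> z12.
have [?|?] := Rlt_le_dec z (64 / 61); first by net_witness 8%N 257%N.
have [?|?] := Rlt_le_dec z (32 / 29); first by net_witness 10%N 977%N.
have [?|?] := Rlt_le_dec z (512 / 441); first by net_witness 10%N 929%N.
have [?|?] := Rlt_le_dec z (512 / 419); first by net_witness 10%N 883%N.
have [?|?] := Rlt_le_dec z (32 / 25); first by net_witness 10%N 839%N.
have [?|?] := Rlt_le_dec z (128 / 95); first by net_witness 9%N 401%N.
have [?|?] := Rlt_le_dec z (512 / 363); first by net_witness 10%N 761%N.
have [?|?] := Rlt_le_dec z (512 / 345); first by net_witness 10%N 727%N.
have [?|?] := Rlt_le_dec z (512 / 329); first by net_witness 10%N 691%N.
have [?|?] := Rlt_le_dec z (512 / 315); first by net_witness 10%N 659%N.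
have [?|?] := Rlt_le_dec z (128 / 75); first by net_witness 10%N 631%N.
have [?|?] := Rlt_le_dec z (512 / 285); first by net_witness 10%N 601%N.
have [?|?] := Rlt_le_dec z (1024 / 543); first by net_witness 10%N 571%N.
have [?|?] := Rlt_le_dec z (256 / 129); first by net_witness 11%N 1087%N.
by net_witness 11%N 1033%N.
Qed.

Lemma net_approx z : 1 <= z -> exists j q : nat,
  q \in net_primes /\ 19 / 20 * z * INR q.-1 <= 2 ^ j <= z * INR q.-1.
Proof.
move=> z1; have two_gt1 : Rabs 2 > 1 by rewrite Rabs_pos_eq; lra.
have [n /(_ n (le_n n))] := Pow_x_infinity 2 two_gt1 z.
rewrite Rabs_pos_eq; last by apply: pow_le; lra.
elim: n z z1 => [|n IH] z z1 z_le /=; first by rewrite /= in z_le; apply: net_approx_base; lra.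
have [z2 | z2] := Rlt_le_dec z 2; first by apply: net_approx_base; lra.
rewrite /= in z_le; have [j [q [q_in [lo hi]]]] := IH (z / 2) ltac:(lra) ltac:(lra).
have q0 := pos_INR q.-1.
by exists j.+1, q; split=> //=; split; nra.
Qed.

Lemma near_primorial_bound x y : (1087 <= y)%N -> INR (y ^ y.+1) <= x -> exists n,
  [/\ (0 < n)%N, INR (phi n) <= x, pow2_odd_squarefree n &
      95 / 101 * x * ln (INR y.+1) <= INR n].
Proof.
move=> y1087 yx; set A := \prod_(p <- odd_primes_upto y) p.-1.
have A0 : 0 < INR A by apply: lt_0_INR; apply/ssrnat.ltP; apply: prod_odd_primes_pred_gt0.
have Ax : INR A <= x.
  by apply: Rle_trans yx; apply: le_INR; apply/ssrnat.leP; apply: prod_odd_primes_pred_le; lia.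
have z1 : 1 <= x / INR A.
  by apply: (Rmult_le_reg_r (INR A)); [lra | rewrite /Rdiv Rmult_assoc Rinv_l; lra].
have [j [q [q_net [lo hi]]]] := net_approx z1.
have /and4P[q_pr q_odd q101 q1087] := allP net_primesP q q_net.
have q_in : q \in odd_primes_upto y by rewrite mem_odd_primes_upto q_pr q_odd; lia.
set n := near_primorial y q j.
have q1 : INR 100 <= INR q.-1 by apply: le_INR; apply/ssrnat.leP; lia.
rewrite INR_IZR_INZ /= in q1.
have phiE : INR (phi n) * INR q.-1 = 2 ^ j * INR A.
  have two : INR 2 = 2 by rewrite INR_IZR_INZ.
  by rewrite -two -INR_expn -!mult_INR; congr INR; apply: totient_near_primorial_mul_pred.
have phi_le : INR (phi n) <= x.
  apply: (Rmult_le_reg_r (INR q.-1)); first lra.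
  rewrite phiE; apply: Rle_trans (Rmult_le_compat_r _ _ _ (Rlt_le _ _ A0) hi) _.
  by right; field; lra.
have phi_ge : 19 / 20 * x <= INR (phi n).
  apply: (Rmult_le_reg_r (INR q.-1)); first lra.
  rewrite phiE; apply: Rle_trans (Rmult_le_compat_r _ _ _ (Rlt_le _ _ A0) lo).
  by right; field; lra.
have n_shape := near_primorial_shape y q j.
exists n; split=> //.
  by rewrite /n; have [t [Q [-> [_ [Q0 _]]]]] := n_shape; rewrite muln_gt0 expn_gt0.
have y2 : (2 <= y)%N by lia.
have := near_primorial_ratio R j y2 q_in; rewrite -!INRE -RdivE -RmultE -/n -/(phi n) => ->.
have [e0 e_le] := euler_factor_bounds q101.
have inv_e : 100 / 101 <= / euler_factor R q.
  by rewrite (_ : 100 / 101 = / (101 / 100)); [apply: Rinv_le_contravar | field].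
have L0 : 0 <= ln (INR y.+1) by rewrite -ln_1; apply: ln_le; [lra | apply: (le_INR 1); lia].
have phiE_ge : 19 / 20 * x * ln (INR y.+1) <= INR (phi n) * euler_product R y.
  by apply: Rmult_le_compat; [lra | lra | lra | apply: ln_le_euler_product].
have : 19 / 20 * x * ln (INR y.+1) * (100 / 101) <=
       INR (phi n) * euler_product R y * / euler_factor R q.
  by apply: Rmult_le_compat => //; [apply: Rmult_le_pos; lra | lra].
rewrite /Rdiv; lra.
Qed.

Lemma admissible_value_exists x : exists n, 1 <= x ->
  [/\ (0 < n)%N, INR (phi n) <= x, pow2_odd_squarefree n &
      (1087 <= pow_root x)%N -> 95 / 101 * x * ln (INR (pow_root x).+1) <= INR n].
Proof.
have [x1 | x_lt1] := Rle_lt_dec 1 x; last by exists 0%N => x1; lra.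
have [x_le _ _] := pow_rootP (x := x) ltac:(lra).
have [y_ge | y_lt] := leqP 1087 (pow_root x).
  have [n [n0 phi_le n_shape n_ge]] := near_primorial_bound y_ge x_le.
  by exists n.
exists 1%N => _; split=> //.
exists 0%N, 1%N; split=> //; split=> //; split=> // d d1.
by move/dvdn_leq => /(_ isT); nia.
Qed.

Theorem lemma2 (gamma : R) (Hgamma : is_euler_gamma gamma) :
  exists m : R -> nat,
    (forall x : R, (1 <= x)%R ->
       (0 < m x)%N /\
       (INR (phi (m x)) <= x)%R /\
       (exists t Q : nat, m x = (2 ^ t * Q)%N /\ odd Q /\ (0 < Q)%N /\ squarefree Q)) /\
    (forall eps : R, (0 < eps)%R ->
       exists X : R, forall x : R, (X <= x)%R ->
         ((/ 2 * exp gamma - eps) * x * ln (ln x) <= INR (m x))%R).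
Proof.
pose m x := proj1_sig (constructive_indefinite_description _ (admissible_value_exists x)).
have m_spec x := proj2_sig (constructive_indefinite_description _ (admissible_value_exists x)).
exists m; split=> [x x1 | eps eps0]; first by have [] := m_spec x x1.
set K := / 2 * exp gamma.
have K0 : 0 < K by have := exp_pos gamma; rewrite /K; lra.
have K_lt : K < 95 / 101 by have := euler_gamma_lt Hgamma; rewrite /K; lra.
have [X HX] := lnln_le_ln_pow_root 1087 (th := 101 / 95 * K) ltac:(lra).
exists X => x Xx; have [x1 lnln0 y_ge th_le] := HX x Xx.
have [_ _ _ /(_ y_ge) m_ge] := m_spec x x1.
apply: Rle_trans m_ge.
have -> : 95 / 101 * x * ln (INR (pow_root x).+1) =
  K * x * ln (ln x) + 95 / 101 * x * (ln (INR (pow_root x).+1) - 101 / 95 * K * ln (ln x)).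
  by field.
have : 0 <= 95 / 101 * x * (ln (INR (pow_root x).+1) - 101 / 95 * K * ln (ln x)).
  by apply: Rmult_le_pos; lra.
have : 0 <= eps * x * ln (ln x) by apply: Rmult_le_pos; [apply: Rmult_le_pos |]; lra.
lra.
Qed.
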